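(* Let $G=(V_1\cup V_2,E)$ be a finite simple graph with $V_1\cap V_2=\emptyset$ such that the induced subgraphs $G[V_1]$ and $G[V_2]$ both have edge-connectivity at least $n$. Assume that every vertex of $V_1$ has at least $m$ neighbors in $V_2$, where $m\ge n+2$. Let $v_1\in V_1$ and $v_2\in V_2$ be adjacent vertices such that there are $m$ paths in $G$ from $v_1$ to $v_2$ that are pairwise internally vertex-disjoint and which only use edges having one endpoint in $V_1$ and the other in $V_2$. Then there are $m+n$ pairwise edge-disjoint paths in $G$ connecting $v_1$ and $v_2$.
   Context: A graph is $\ell$-edge-connected if it has more than one vertex and removing any set of fewer than $\ell$ edges leaves it connected; its edge-connectivity is the largest such $\ell$. The single edge $\{v_1,v_2\}$ counts as a path. *)

From mathcomp Require Import all_boot.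
Set Implicit Arguments. Unset Strict Implicit. Unset Printing Implicit Defensive.

Section Graphs.
Variable T : finType.

Definition simple_graph (e : rel T) : Prop := symmetric e /\ irreflexive e.

(* Edges are unordered pairs {a, b}, represented as 2-element sets. *)
Definition induced_edge_connected (e : rel T) (S : {set T}) (l : nat) : Prop :=
  1 < #|S| /\
  forall F : {set {set T}}, #|F| < l ->
    forall x y, x \in S -> y \in S ->
      connect (fun a b => [&& a \in S, b \in S, e a b & [set a; b] \notin F]) x y.

(* A path from x to y is given by its vertex sequence x :: p (p = the
   vertices after x); consecutive vertices adjacent, no repeated vertex,
   ending at y. *)
Definition is_path (e : rel T) (x y : T) (p : seq T) : bool :=
  [&& path e x p, last x p == y & uniq (x :: p)].

Definition path_edges (x : T) (p : seq T) : {set {set T}} :=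
  [set:: [seq [set ab.1; ab.2] | ab <- zip (x :: p) p]].

Definition interior (x y : T) (p : seq T) : {set T} :=
  [set u | [&& u \in x :: p, u != x & u != y]].

Definition crossing_path (V1 V2 : {set T}) (x : T) (p : seq T) : bool :=
  all (fun ab : T * T => ((ab.1 \in V1) && (ab.2 \in V2))
                        || ((ab.1 \in V2) && (ab.2 \in V1)))
      (zip (x :: p) p).

End Graphs.

From mathcomp Require Import all_boot ssralg ssrnum ssrint zify.
Set Implicit Arguments. Unset Strict Implicit. Unset Printing Implicit Defensive.
Import GRing.Theory Num.Theory.

(** Two internally vertex-disjoint v1-v2 paths can only share the edge v1 v2,
    and then both are that one-edge path; so the m given paths are edge-disjoint.
    Delete their edges, all of which cross between V1 and V2. A vertex u <> v1
    of V1 is interior to at most one of the paths, so it loses at most two of its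
    m >= n + 2 edges to V2: after deleting fewer than n further edges, u keeps an
    edge uw to V2, v1 still reaches u inside V1 and w reaches v2 inside V2. The
    remaining graph thus has n edge-disjoint v1-v2 paths by the edge form of
    Menger's theorem, obtained from integral unit flows: augment along residual
    paths up to value n, then peel off one path at a time. *)

Section PathEdges.
Variable T : finType.
Implicit Types (x y a b c d u : T) (p : seq T).

Lemma unzip1_zip_path x p : unzip1 (zip (x :: p) p) = belast x p.
Proof. by elim: p x => //= y p IH x; rewrite IH. Qed.

Lemma unzip2_zip_path x p : unzip2 (zip (x :: p) p) = p.
Proof. by rewrite unzip2_zip ?leqnSn. Qed.

Lemma zip_path_mem_belast x p a b : (a, b) \in zip (x :: p) p -> a \in belast x p.
Proof. by move=> ab; rewrite -unzip1_zip_path (map_f fst ab). Qed.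

Lemma zip_path_mem_tail x p a b : (a, b) \in zip (x :: p) p -> b \in p.
Proof. by move=> ab; rewrite -[p in _ \in p](unzip2_zip_path x) (map_f snd ab). Qed.

Lemma path_zip (r : rel T) x p a b :
  path r x p -> (a, b) \in zip (x :: p) p -> r a b.
Proof.
elim: p x => //= y p IH x /andP[rxy pp]; rewrite in_cons => /orP[/eqP[-> ->]//|].
exact: IH.
Qed.

Lemma belast_uniq x p : uniq (x :: p) -> uniq (belast x p).
Proof. by rewrite lastI rcons_uniq => /andP[]. Qed.

Lemma mem_belast_uniq x p a :
  uniq (x :: p) -> (a \in belast x p) = (a \in x :: p) && (a != last x p).
Proof.
rewrite lastI rcons_uniq => /andP[lastNbelast _]; rewrite mem_rcons in_cons.
by have [->|_] := eqVneq a (last x p); rewrite ?(negbTE lastNbelast) ?andbT.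
Qed.

Lemma mem_behead_uniq x p a :
  uniq (x :: p) -> (a \in p) = (a \in x :: p) && (a != x).
Proof.
case/andP=> xNp _; rewrite in_cons.
by have [->|_] := eqVneq a x; rewrite ?(negbTE xNp) ?andbT.
Qed.

Lemma sub_is_path (r r' : rel T) x y p :
  subrel r r' -> is_path r x y p -> is_path r' x y p.
Proof. by move=> rr' /and3P[rp lp Up]; rewrite /is_path (sub_path rr' rp) lp Up. Qed.

Lemma eq_set2 a b c d :
  [set a; b] = [set c; d] -> (a = c /\ b = d) \/ (a = d /\ b = c).
Proof.
move=> E.
have : a \in [set c; d] by rewrite -E set21.
have : b \in [set c; d] by rewrite -E set22.
have : c \in [set a; b] by rewrite E set21.
have : d \in [set a; b] by rewrite E set22.
rewrite !inE; do 4 case/orP=> /eqP ?; subst; by [left|right].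
Qed.

Lemma card_nbr_edges u (A : {set T}) (F : {set {set T}}) :
  u \notin A -> #|[set w in A | [set u; w] \in F]| <= #|F|.
Proof.
move=> uNA; rewrite -(card_in_imset (f := fun w => [set u; w])).
  apply: subset_leq_card; apply/subsetP => E /imsetP[w].
  by rewrite inE => /andP[_ uwF] ->.
move=> w w'; rewrite !inE => /andP[wA _] _ /eq_set2[[_ //]|[_ wu]].
by rewrite -wu wA in uNA.
Qed.

Lemma path_edges_zip E x p :
  E \in path_edges x p -> exists a b, E = [set a; b] /\ (a, b) \in zip (x :: p) p.
Proof. by rewrite inE => /mapP[[a b] ab ->]; exists a, b. Qed.

Lemma path_edge_vertices E x p : E \in path_edges x p -> {subset E <= x :: p}.
Proof.
case/path_edges_zip=> a [b [-> ab]] z; rewrite !inE => /orP[]/eqP->.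
  by rewrite -in_cons mem_belast // (zip_path_mem_belast ab).
by rewrite (zip_path_mem_tail ab) orbT.
Qed.

Lemma crossing_path_edge (V1 V2 : {set T}) x p a b :
  [disjoint V1 & V2] -> crossing_path V1 V2 x p -> [set a; b] \in path_edges x p ->
  ~~ ((a \in V1) && (b \in V1)) && ~~ ((a \in V2) && (b \in V2)).
Proof.
move=> dis cross /path_edges_zip[c [d [/eq_set2 cd /(allP cross)]]] /=.
have F1 z : z \in V1 -> z \in V2 = false by exact: disjointFr.
have F2 z : z \in V2 -> z \in V1 = false by exact: disjointFl.
by case: cd => -[-> ->] /orP[]/andP[c_ d_];
  rewrite ?(F1 _ c_) ?(F1 _ d_) ?(F2 _ c_) ?(F2 _ d_) ?andbF.
Qed.

Lemma card_path_nbrs x p u :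
  uniq (x :: p) -> #|[set w | [set u; w] \in path_edges x p]| <= 2.
Proof.
move=> U; set z := zip (x :: p) p.
pose succ := [seq ab.2 | ab <- z & ab.1 == u].
pose pred := [seq ab.1 | ab <- z & ab.2 == u].
have sub : [set w | [set u; w] \in path_edges x p] \subset [set:: succ ++ pred].
  apply/subsetP => w; rewrite inE => /path_edges_zip[a [b [/eq_set2 E ab]]].
  rewrite inE mem_cat; move: ab; case: E => -[<- <-] ab; apply/orP; [left|right].
    by apply/mapP; exists (u, w); rewrite // mem_filter eqxx.
  by apply/mapP; exists (w, u); rewrite // mem_filter /= eqxx.
apply: leq_trans (subset_leq_card sub) _; rewrite cardsE.
apply: leq_trans (card_size _) _; rewrite size_cat !size_map !size_filter.
have count_le1 (s : seq T) : uniq s -> count_mem u s <= 1.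
  by move=> Us; rewrite count_uniq_mem ?leq_b1.
rewrite -[2]/(1 + 1) leq_add //.
  by have := count_le1 _ (belast_uniq U); rewrite -unzip1_zip_path count_map.
have Up : uniq p by case/andP: U.
by have := count_le1 _ Up; rewrite -[p in count_mem u p](unzip2_zip_path x) count_map.
Qed.

End PathEdges.

Section Paths.
Variables (T : finType) (e : rel T).
Implicit Types (x y u : T) (p q : seq T).

Lemma connect_is_path x y : connect e x y -> exists p, is_path e x y p.
Proof.
case/connectP=> p ep ->; case: (shortenP ep) => p' ep' Up' _.
by exists p'; rewrite /is_path ep' Up' eqxx.
Qed.

Lemma connect_exit (S : {set T}) x y :
  connect e x y -> x \in S -> y \notin S ->
  exists a b, [/\ a \in S, b \notin S & e a b].
Proof.
case/connectP=> p; elim: p x => [|z p IH] x /=; first by move=> _ -> ->.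
case/andP=> exz ep yl xS yNS; have [zS|zNS] := boolP (z \in S).
  exact: IH ep yl zS yNS.
by exists x, z.
Qed.

Lemma is_path_direct x y p :
  is_path e x y p -> (x, y) \in zip (x :: p) p -> p = [:: y].
Proof.
case/and3P=> _ /eqP <-; case: p => [|c q] //= /andP[xNcq Ucq].
rewrite in_cons => /orP[/eqP[last_c] | /zip_path_mem_belast/mem_belast]; last first.
  by rewrite (negbTE xNcq).
case: q last_c Ucq {xNcq} => //= d q last_c /andP[cNdq _].
by rewrite -last_c mem_last in cNdq.
Qed.

Lemma path_edge_shared x y p q E :
  is_path e x y p -> [disjoint interior x y p & interior x y q] ->
  E \in path_edges x p -> {subset E <= x :: q} -> p = [:: y].
Proof.
move=> pxy pq Ep Eq; have /and3P[_ /eqP last_p Up] := pxy.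
have ends z : z \in E -> (z == x) || (z == y).
  move=> zE; apply/negPn/negP; rewrite negb_or => /andP[zx zy].
  have zp : z \in interior x y p by rewrite inE (path_edge_vertices Ep zE) zx zy.
  by have := disjointFr pq zp; rewrite inE Eq // zx zy.
case/path_edges_zip: Ep ends => a [b [-> ab]] ends.
have aNy : a != y.
  rewrite -last_p; have := zip_path_mem_belast ab.
  by rewrite (mem_belast_uniq _ Up) => /andP[].
have bNx : b != x.
  by have := zip_path_mem_tail ab; rewrite (mem_behead_uniq _ Up) => /andP[].
move: (ends a (set21 a b)) (ends b (set22 a b)); rewrite (negbTE aNy) (negbTE bNx) orbF.
by move=> /eqP a_x /eqP b_y; rewrite a_x b_y in ab; apply: is_path_direct pxy ab.
Qed.

Lemma disjoint_path_edges x y p q :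
  is_path e x y p -> is_path e x y q -> p != q ->
  [disjoint interior x y p & interior x y q] ->
  [disjoint path_edges x p & path_edges x q].
Proof.
move=> pxy qxy /negP pNq pq; rewrite disjoint_subset; apply/subsetP => E Ep.
rewrite inE; apply/negP => Eq; apply: pNq.
rewrite (path_edge_shared pxy pq Ep (path_edge_vertices Eq)).
rewrite disjoint_sym in pq.
by rewrite (path_edge_shared qxy pq Eq (path_edge_vertices Ep)).
Qed.

Lemma card_paths_nbrs (I : finType) (P : I -> seq T) x y u :
  (forall i, is_path e x y (P i)) ->
  (forall i j, i != j -> [disjoint interior x y (P i) & interior x y (P j)]) ->
  u != x -> u != y ->
  #|[set w | [set u; w] \in \bigcup_i path_edges x (P i)]| <= 2.
Proof.
move=> Pxy Pint ux uy.
have u_interior i w : [set u; w] \in path_edges x (P i) -> u \in interior x y (P i).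
  by move=> Ew; rewrite inE (path_edge_vertices Ew (set21 u w)) ux uy.
have [->|[w0]] := set_0Vmem [set w | [set u; w] \in \bigcup_i path_edges x (P i)].
  by rewrite cards0.
rewrite inE => /bigcupP[i0 _ /u_interior u_i0].
have /and3P[_ _ U0] := Pxy i0.
apply: leq_trans (card_path_nbrs u U0); apply: subset_leq_card.
apply/subsetP => w; rewrite !inE => /bigcupP[i _ Ew].
have [<-|ii0] := eqVneq i i0; first by rewrite inE in Ew.
by have := disjointFr (Pint i i0 ii0) (u_interior i w Ew); rewrite u_i0.
Qed.

End Paths.

Section PathFlow.
Local Open Scope ring_scope.
Variable T : finType.
Implicit Types (x y a b : T) (p : seq T).

Definition path_flow x p a b : int :=
  ((a, b) \in zip (x :: p) p)%:R - ((b, a) \in zip (x :: p) p)%:R.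

Lemma path_flowN x p a b : path_flow x p a b = - path_flow x p b a.
Proof. by rewrite /path_flow opprB. Qed.

Lemma sum_count_pairs1 (s : seq (T * T)) a :
  (\sum_b count_mem (a, b) s = count_mem a (unzip1 s))%N.
Proof.
elim: s => [|[c d] s IH] /=; first by rewrite big1.
rewrite big_split /= IH; congr (_ + _)%N.
have [->|ca] := eqVneq c a; last first.
  by rewrite big1 // => b _; rewrite xpair_eqE (negbTE ca).
rewrite (bigD1 d) //= eqxx big1 // => b /negbTE bd.
by rewrite xpair_eqE eqxx eq_sym bd.
Qed.

Lemma sum_count_pairs2 (s : seq (T * T)) a :
  (\sum_b count_mem (b, a) s = count_mem a (unzip2 s))%N.
Proof.
have -> : unzip2 s = unzip1 [seq (ab.2, ab.1) | ab <- s].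
  by rewrite /unzip1 -map_comp.
rewrite -sum_count_pairs1; apply: eq_bigr => b _; rewrite count_map.
by apply: eq_count => -[c d] /=; rewrite !xpair_eqE andbC.
Qed.

Lemma sum_path_flow x y p a : x != y -> uniq (x :: p) -> last x p = y ->
  \sum_b path_flow x p a b = (a == x)%:R - (a == y)%:R.
Proof.
move=> xy U last_p; set z := zip (x :: p) p.
have count_z c : count_mem c z = (c \in z) by rewrite count_uniq_mem ?zip_uniql.
rewrite /path_flow sumrB -!natr_sum.
rewrite (eq_bigr _ (fun b _ => esym (count_z (a, b)))).
rewrite (eq_bigr _ (fun b _ => esym (count_z (b, a)))).
rewrite sum_count_pairs1 sum_count_pairs2 unzip1_zip_path unzip2_zip_path.
have Up : uniq p by case/andP: U.
rewrite !count_uniq_mem ?belast_uniq //.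
rewrite (mem_belast_uniq _ U) (mem_behead_uniq _ U) last_p.
have yxp : y \in x :: p by rewrite -last_p mem_last.
have [->|ax] := eqVneq a x; first by rewrite mem_head xy (negbTE xy).
have [->|ay] := eqVneq a y; first by rewrite yxp.
by rewrite !andbT subrr.
Qed.

End PathFlow.

Section EdgeMenger.
Local Open Scope ring_scope.
Variables (T : finType) (h : rel T) (x y : T).
Hypotheses (hsym : symmetric h) (xy : x != y).

(* f a b is the net flow from a to b: each edge of the undirected graph h carries
   at most one unit, in either direction, and the flow has value k from x to y. *)
Definition unit_flow (k : nat) (f : T -> T -> int) : Prop :=
  [/\ forall a b, f a b = - f b a,
      forall a b, -1 <= f a b <= 1,
      forall a b, f a b != 0 -> h a b &
      forall a, \sum_b f a b = ((a == x)%:R - (a == y)%:R) *+ k].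

Lemma unit_flow0 : unit_flow 0 (fun _ _ => 0).
Proof. by split=> [a b|a b|a b|a]; rewrite ?oppr0 ?eqxx ?big1. Qed.

Lemma unit_flow_cut k f (S : {set T}) :
  unit_flow k f -> x \in S -> y \notin S ->
  \sum_(a in S) \sum_(b in ~: S) f a b = k%:R.
Proof.
case=> skew _ _ cons xS yNS.
have inner : \sum_(a in S) \sum_(b in S) f a b = 0.
  set X := LHS; have : X = - X.
    rewrite {1}/X exchange_big /= -sumrN; apply: eq_bigr => a _.
    by rewrite -sumrN; apply: eq_bigr => b _; rewrite skew.
  lia.
have out : \sum_(a in S) \sum_b f a b = k%:R.
  rewrite (bigD1 x) //= cons eqxx (negbTE xy) subr0 big1 ?addr0 // => a /andP[aS ax].
  have ay : a != y by apply: contraNneq yNS => <-.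
  by rewrite cons (negbTE ax) (negbTE ay) subrr mul0rn.
have split_b a : \sum_b f a b = \sum_(b in S) f a b + \sum_(b in ~: S) f a b.
  by rewrite (bigID (mem S)) /=; congr (_ + _); apply: eq_bigl => b; rewrite inE.
by rewrite -out (eq_bigr _ (fun a _ => split_b a)) big_split /= inner add0r.
Qed.

Lemma unit_flowD_path k f p :
  unit_flow k f -> is_path (fun a b => h a b && (f a b <= 0)) x y p ->
  unit_flow k.+1 (fun a b => f a b + path_flow x p a b).
Proof.
case=> skew bound supp cons /and3P[res_p /eqP last_p Up].
have res a b : (a, b) \in zip (x :: p) p -> h a b && (f a b <= 0).
  exact: path_zip res_p.
split=> [a b|a b|a b nz|a].
- by rewrite opprD -skew -path_flowN.
- rewrite /path_flow; have := bound a b; have := skew a b.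
  case: ((a, b) \in _) (res a b) => [/(_ isT)/andP[_ fab]|_];
  case: ((b, a) \in _) (res b a) => [/(_ isT)/andP[_ fba]|_]; lia.
- case ab: ((a, b) \in zip (x :: p) p); first by case/andP: (res a b ab).
  case ba: ((b, a) \in zip (x :: p) p); first by case/andP: (res b a ba); rewrite hsym.
  by apply: supp; move: nz; rewrite /path_flow ab ba subrr addr0.
- by rewrite big_split /= cons (sum_path_flow a xy Up last_p) mulrS addrC.
Qed.

Lemma unit_flowB_path k f p :
  unit_flow k.+1 f -> is_path (fun a b => f a b == 1) x y p ->
  unit_flow k (fun a b => f a b - path_flow x p a b).
Proof.
case=> skew bound supp cons /and3P[unit_p /eqP last_p Up].
have unit a b : (a, b) \in zip (x :: p) p -> f a b = 1.
  by move=> ab; apply/eqP; exact: path_zip unit_p ab.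
split=> [a b|a b|a b nz|a].
- by rewrite [f a b]skew [path_flow x p a b]path_flowN opprK opprB addrC.
- rewrite /path_flow; have := bound a b; have := skew a b.
  case: ((a, b) \in _) (unit a b) => [/(_ isT) fab|_];
  case: ((b, a) \in _) (unit b a) => [/(_ isT) fba|_]; lia.
- apply: supp; apply: contra nz => /eqP fab0; rewrite /path_flow.
  case ab: ((a, b) \in zip (x :: p) p); first by rewrite unit in fab0.
  case ba: ((b, a) \in zip (x :: p) p); first by rewrite skew unit in fab0.
  by rewrite fab0.
- by rewrite sumrB cons (sum_path_flow a xy Up last_p) mulrSr addrK.
Qed.

Lemma path_flow_unit (f : T -> T -> int) p a b :
  (forall a b, f a b = - f b a) -> path (fun a b => f a b == 1) x p ->
  (a, b) \in zip (x :: p) p -> path_flow x p a b = 1.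
Proof.
move=> skew unit_p ab; rewrite /path_flow ab.
case ba: ((b, a) \in _) => //.
move: (path_zip unit_p ab) (path_zip unit_p ba) => /eqP fab /eqP fba.
by move: fab; rewrite skew fba; lia.
Qed.

Lemma unit_flow_connect k f :
  unit_flow k.+1 f -> connect (fun a b => f a b == 1) x y.
Proof.
move=> fk; have [_ bound _ _] := fk; apply/negPn/negP => noPath.
pose R := [set b | connect (fun a b => f a b == 1) x b].
have xR : x \in R by rewrite inE connect0.
have yNR : y \notin R by rewrite inE.
have := unit_flow_cut fk xR yNR.
have : \sum_(a in R) \sum_(b in ~: R) f a b <= 0.
  apply: sumr_le0 => a aR; apply: sumr_le0 => b; rewrite inE => bNR.
  have : f a b != 1.
    apply: contra bNR; rewrite !inE in aR * => fab.
    exact: connect_trans aR (connect1 fab).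
  have := bound a b; lia.
lia.
Qed.

Lemma unit_flow_decomp k f : unit_flow k f -> exists Q : nat -> seq T,
  (forall i, (i < k)%N -> is_path (fun a b => f a b == 1) x y (Q i)) /\
  (forall i j, (i < k)%N -> (j < k)%N -> i != j ->
     [disjoint path_edges x (Q i) & path_edges x (Q j)]).
Proof.
elim: k f => [|k IH] f fk; first by exists (fun _ => [::]).
have [skew bound _ _] := fk.
have [p unit_p] := connect_is_path (unit_flow_connect fk).
have /and3P[unit_p1 _ _] := unit_p.
have f'k := unit_flowB_path fk unit_p; have [skew' _ _ _] := f'k.
have [Q [Qp Qd]] := IH _ f'k.
have on_p a b : (a, b) \in zip (x :: p) p -> f a b - path_flow x p a b = 0.
  move=> ab; rewrite (path_flow_unit skew unit_p1 ab).
  by rewrite (eqP (path_zip unit_p1 ab)) subrr.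
have unit_Q i : (i < k)%N -> is_path (fun a b => f a b == 1) x y (Q i).
  move/Qp; apply: sub_is_path => a b; rewrite /path_flow.
  have := bound a b; have := skew a b.
  case: ((b, a) \in _) (path_zip unit_p1 (a := b) (b := a)) => [/(_ isT)/eqP|_];
  case: ((a, b) \in _) => /=; lia.
have p_Q i : (i < k)%N -> [disjoint path_edges x p & path_edges x (Q i)].
  move=> ik; rewrite disjoint_subset; apply/subsetP => E.
  case/path_edges_zip=> a [b [-> ab]]; rewrite inE.
  apply/negP => /path_edges_zip[c [d [/eq_set2 cd]]].
  have /and3P[Qi _ _] := Qp i ik; move/(path_zip Qi).
  by case: cd => -[<- <-] /=; [rewrite on_p | rewrite skew' on_p ?oppr0].
exists (fun i => if i is i'.+1 then Q i' else p); split; first by case.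
case=> [|i] [|j] //= ik jk ij; first exact: p_Q.
  by rewrite disjoint_sym; exact: p_Q.
exact: Qd.
Qed.

Variable n : nat.
Hypothesis cut_n : forall F : {set {set T}}, (#|F| < n)%N ->
  connect (fun a b => h a b && ([set a; b] \notin F)) x y.

Lemma unit_flow_saturated k f : unit_flow k f ->
  ~~ connect (fun a b => h a b && (f a b <= 0)) x y -> (n <= k)%N.
Proof.
move=> fk noAug; have [_ bound supp _] := fk.
(* The h-edges leaving the set S of vertices reachable by augmenting paths all
   carry one unit out of S, so by [unit_flow_cut] there are exactly k of them. *)
pose S := [set b | connect (fun a b => h a b && (f a b <= 0)) x b].
have xS : x \in S by rewrite inE connect0.
have yNS : y \notin S by rewrite inE.
have f_out a b : a \in S -> b \notin S -> f a b = (h a b)%:R.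
  move=> aS bNS; have : ~~ (h a b && (f a b <= 0)).
    apply: contra bNS; rewrite !inE in aS * => res.
    by apply: connect_trans aS _; exact: connect1.
  case hab: (h a b) => /=; first by have := bound a b; lia.
  by move=> _; apply/eqP; apply: contraFT hab; exact: supp.
clearbody S.
pose C := [set ab : T * T | [&& ab.1 \in S, ab.2 \notin S & h ab.1 ab.2]].
have kC : k = #|C|.
  apply/eqP; rewrite -(eqr_nat int) -(unit_flow_cut fk xS yNS).
  rewrite -sum1_card natr_sum; apply/eqP.
  rewrite pair_big_dep /= [LHS]big_mkcond [RHS]big_mkcond /=.
  apply: eq_bigr => -[a b] _; rewrite !inE /=.
  have [aS|] := boolP (a \in S); have [bS|bNS] := boolP (b \in S) => //=.
  by rewrite f_out //; case: (h a b).
rewrite leqNgt; apply/negP => kn.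
pose F := [set [set ab.1; ab.2] | ab in C].
have Fn : (#|F| < n)%N by rewrite (leq_ltn_trans (leq_imset_card _ _)) // -kC.
have [a [b [aS bNS /andP[hab abNF]]]] := connect_exit (cut_n Fn) xS yNS.
by case/negP: abNF; apply/imsetP; exists (a, b); rewrite // !inE /= aS bNS hab.
Qed.

Lemma unit_flow_augment k f :
  unit_flow k f -> (k < n)%N -> exists f', unit_flow k.+1 f'.
Proof.
move=> fk kn.
have [|noAug] := boolP (connect (fun a b => h a b && (f a b <= 0)) x y).
  case/connect_is_path=> p aug.
  by eexists; exact: unit_flowD_path fk aug.
by move: (unit_flow_saturated fk noAug); rewrite leqNgt kn.
Qed.

Lemma exists_unit_flow : exists f, unit_flow n f.
Proof.
suff : forall k, (k <= n)%N -> exists f, unit_flow k f by apply.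
elim=> [|k IH] kn; first by exists (fun _ _ => 0); exact: unit_flow0.
by have [f fk] := IH (ltnW kn); exact: unit_flow_augment fk kn.
Qed.

Theorem edge_menger : exists Q : 'I_n -> seq T,
  (forall i, is_path h x y (Q i)) /\
  (forall i j, i != j -> [disjoint path_edges x (Q i) & path_edges x (Q j)]).
Proof.
have [f fn] := exists_unit_flow; have [_ _ supp _] := fn.
have [Q [Qp Qd]] := unit_flow_decomp fn.
exists (fun i => Q i); split=> [i|i j ij]; last exact: Qd.
by apply: sub_is_path (Qp i (ltn_ord i)) => a b /eqP fab; apply: supp; rewrite fab.
Qed.

End EdgeMenger.

Section Residual.
Variables (T : finType) (e : rel T) (V1 V2 : {set T}) (n m : nat) (v1 v2 : T).
Variable U : {set {set T}}.
Hypotheses (dis : [disjoint V1 & V2]) (v1V1 : v1 \in V1) (v2V2 : v2 \in V2).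
Hypotheses (conn1 : induced_edge_connected e V1 n)
           (conn2 : induced_edge_connected e V2 n).
Hypothesis deg : forall u, u \in V1 -> m <= #|[set w in V2 | e u w]|.
Hypothesis mn : n + 2 <= m.
Hypothesis U_cross : forall a b, [set a; b] \in U ->
  ~~ ((a \in V1) && (b \in V1)) && ~~ ((a \in V2) && (b \in V2)).
Hypothesis U_deg :
  forall u, u \in V1 -> u != v1 -> #|[set w | [set u; w] \in U]| <= 2.

Lemma exists_fresh_edge (u : T) (A : {set T}) (F : {set {set T}}) :
  u \notin A -> #|[set w | [set u; w] \in U]| + #|F| < #|A| ->
  exists2 w, w \in A & ([set u; w] \notin U) && ([set u; w] \notin F).
Proof.
move=> uNA lt.
have [w /andP[wA fresh]|none] :=
  pickP [pred w | (w \in A) && (([set u; w] \notin U) && ([set u; w] \notin F))].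
  by exists w.
have sub : A \subset [set w | [set u; w] \in U] :|: [set w in A | [set u; w] \in F].
  apply/subsetP => w wA; have /negbT := none w.
  by rewrite /= wA /= negb_and !negbK !inE wA.
suff : #|A| <= #|[set w | [set u; w] \in U]| + #|F| by rewrite leqNgt lt.
apply: leq_trans (subset_leq_card sub) _; apply: leq_trans (leq_card_setU _ _) _.
by rewrite leq_add2l card_nbr_edges.
Qed.

Lemma induced_connect_avoid (S : {set T}) (F : {set {set T}}) a b :
  {in S &, forall c d, [set c; d] \notin U} ->
  connect (fun c d => [&& c \in S, d \in S, e c d & [set c; d] \notin F]) a b ->
  connect (fun c d => e c d && ([set c; d] \notin U) && ([set c; d] \notin F)) a b.
Proof.
move=> SU; apply: connect_sub => c d /and4P[cS dS ecd cdF].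
by apply: connect1; rewrite ecd cdF (SU c d cS dS).
Qed.

Lemma residual_connect (F : {set {set T}}) : #|F| < n ->
  connect (fun a b => e a b && ([set a; b] \notin U) && ([set a; b] \notin F)) v1 v2.
Proof.
move=> Fn; have [V1gt1 H1] := conn1; have [_ H2] := conn2.
have /card_gt0P[u] : 0 < #|V1 :\ v1| by move: V1gt1; rewrite (cardsD1 v1) v1V1.
rewrite !inE => /andP[uNv1 uV1].
have uNN : u \notin [set w in V2 | e u w] by rewrite inE (disjointFr dis uV1).
have few : #|[set w | [set u; w] \in U]| + #|F| < #|[set w in V2 | e u w]|.
  by have := U_deg uV1 uNv1; have := deg uV1; lia.
have [w] := exists_fresh_edge uNN few; rewrite inE => /andP[wV2 euw] fresh.
have inside1 : {in V1 &, forall c d, [set c; d] \notin U}.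
  by move=> c d cV dV; apply/negP => /U_cross; rewrite cV dV.
have inside2 : {in V2 &, forall c d, [set c; d] \notin U}.
  by move=> c d cV dV; apply/negP => /U_cross; rewrite cV dV andbF.
apply: connect_trans (induced_connect_avoid inside1 (H1 F Fn v1 u v1V1 uV1)) _.
apply: connect_trans (connect1 _) (induced_connect_avoid inside2 (H2 F Fn w v2 wV2 v2V2)).
by rewrite euw.
Qed.

End Residual.

Definition join_family (X : Type) m n (A : 'I_m -> X) (B : 'I_n -> X)
    (i : 'I_(m + n)) : X :=
  match split i with inl j => A j | inr j => B j end.

Lemma disjoint_join_family (X : Type) (U : finType) (g : X -> {set U}) m n
    (A : 'I_m -> X) (B : 'I_n -> X) :
  (forall i j, i != j -> [disjoint g (A i) & g (A j)]) ->
  (forall i j, i != j -> [disjoint g (B i) & g (B j)]) ->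
  (forall i j, [disjoint g (A i) & g (B j)]) ->
  forall i j, i != j -> [disjoint g (join_family A B i) & g (join_family A B j)].
Proof.
move=> dA dB dAB i j; rewrite -(inj_eq (can_inj (@splitK m n))) /join_family.
case: (split i) => a; case: (split j) => b /= ab;
  [exact: dA | exact: dAB | rewrite disjoint_sym; exact: dAB | exact: dB].
Qed.

Unset Implicit Arguments.

Theorem proposition1 (T : finType) (e : rel T) (V1 V2 : {set T})
    (n m : nat) (v1 v2 : T) (P : 'I_m -> seq T) :
  simple_graph e ->
  [disjoint V1 & V2] ->
  V1 :|: V2 = [set: T] ->
  induced_edge_connected e V1 n ->
  induced_edge_connected e V2 n ->
  (forall u, u \in V1 -> m <= #|[set w in V2 | e u w]|) ->
  n + 2 <= m ->
  v1 \in V1 -> v2 \in V2 -> e v1 v2 ->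
  (forall i, is_path e v1 v2 (P i)) ->
  (forall i, crossing_path V1 V2 v1 (P i)) ->
  (forall i j, i != j -> P i != P j) ->
  (forall i j, i != j -> [disjoint interior v1 v2 (P i) & interior v1 v2 (P j)]) ->
  exists Q : 'I_(m + n) -> seq T,
    (forall i, is_path e v1 v2 (Q i)) /\
    (forall i j, i != j -> [disjoint path_edges v1 (Q i) & path_edges v1 (Q j)]).
Proof.
move=> [esym _] dis _ conn1 conn2 deg mn v1V1 v2V2 _ Pp Pc Pneq Pint.
have v1Nv2 : v1 != v2 by apply: contraTneq v2V2 => <-; rewrite (disjointFr dis v1V1).
pose U := \bigcup_i path_edges v1 (P i).
pose h a b := e a b && ([set a; b] \notin U).
have hsym : symmetric h by move=> a b; rewrite /h esym setUC.
have U_cross a b : [set a; b] \in U ->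
    ~~ ((a \in V1) && (b \in V1)) && ~~ ((a \in V2) && (b \in V2)).
  by case/bigcupP=> i _; apply: crossing_path_edge dis (Pc i).
have U_deg u : u \in V1 -> u != v1 -> #|[set w | [set u; w] \in U]| <= 2.
  move=> uV1 uNv1; apply: card_paths_nbrs Pp Pint uNv1 _.
  by apply: contraTneq v2V2 => <-; rewrite (disjointFr dis uV1).
have [Q [Qp Qd]] := edge_menger hsym v1Nv2
  (residual_connect dis v1V1 v2V2 conn1 conn2 deg mn U_cross U_deg).
exists (join_family P Q); split.
  move=> i; rewrite /join_family; case: (split i) => j; first exact: Pp.
  by apply: sub_is_path (Qp j) => a b /andP[].
apply: disjoint_join_family => [i j ij|i j ij|i j]; last first.
- rewrite disjoint_subset; apply/subsetP => E Ei; rewrite inE.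
  apply/negP => /path_edges_zip[a [b [Eab ab]]]; have /and3P[Qj _ _] := Qp j.
  case/andP: (path_zip Qj ab) => _; rewrite -Eab.
  by case/negP; apply/bigcupP; exists i.
- exact: Qd.
- exact: disjoint_path_edges (Pp i) (Pp j) (Pneq i j ij) (Pint i j ij).
Qed.
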